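(* Let $k$ be a commutative ring with unit and $A=k[t_1,\ldots,t_r]$ graded with each $t_i$ of degree $2$. Let $M$ be a graded $A$-module, bounded from below, with $\operatorname{Tor}^A_1(M,k)=0$. Let $S\subset A$ be the multiplicative subset generated by those elements of $A^2$ which can be extended to a basis of the $k$-module $A^2$. Then the localisation map $M\to S^{-1}M$ is injective.
   Context: $A^2$ is the degree-$2$ part of $A$, i.e. the free $k$-module with basis $t_1,\ldots,t_r$; its elements are called linear. $k$ is an $A$-module via the augmentation sending each $t_i$ to $0$. *)

From HB Require Import structures.
From mathcomp Require Import all_boot all_algebra.
From mathcomp Require Export mpoly.
Set Implicit Arguments. Unset Strict Implicit. Unset Printing Implicit Defensive.
Import GRing.Theory.
Local Open Scope ring_scope.

(* A = k[t_1,...,t_r] is {mpoly k[r]}; t_i (i : 'I_r) is 'X_i.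
   Grading: t_i has degree 2, so a polynomial homogeneous of standard degree d
   (p \is d.-homog, i.e. all monomials of total degree d) has degree 2*d.
   A^2 is the k-submodule of 1.-homog polynomials (k-linear combinations of
   the t_i). *)

Definition linear_elt (k : comRingType) (r : nat) (p : {mpoly k[r]}) : Prop :=
  p \is 1.-homog.

Definition is_basis_A2 (k : comRingType) (r s : nat) (b : 'I_s -> {mpoly k[r]}) : Prop :=
  [/\ (forall j, linear_elt (b j)),
      (forall p : {mpoly k[r]}, linear_elt p ->
          exists c : 'I_s -> k, p = \sum_(j < s) c j *: b j) &
      (forall c : 'I_s -> k, \sum_(j < s) c j *: b j = 0 -> forall j, c j = 0)].

Definition extendable_linear (k : comRingType) (r : nat) (l : {mpoly k[r]}) : Prop :=
  exists (s : nat) (b : 'I_s -> {mpoly k[r]}) (j0 : 'I_s),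
    is_basis_A2 b /\ l = b j0.

Definition in_S (k : comRingType) (r : nat) (s : {mpoly k[r]}) : Prop :=
  exists ls : seq {mpoly k[r]},
    (forall l, l \in ls -> extendable_linear l) /\ s = \prod_(l <- ls) l.

(* A grading of the A-module M: M = (+)_{n in Z} Mn n (internal direct sum of
   k-submodules), with A^{2d} * Mn n contained in Mn (n + 2d). *)
Definition graded_module (k : comRingType) (r : nat)
    (M : lmodType {mpoly k[r]}) (Mn : int -> {pred M}) : Prop :=
  [/\ (forall n, 0 \in Mn n),
      (forall n x y, x \in Mn n -> y \in Mn n -> x + y \in Mn n),
      (forall n (a : {mpoly k[r]}) (d : nat) x,
          a \is d.-homog -> x \in Mn n -> a *: x \in Mn (n + (2 * d)%:Z)),
      (forall x : M, exists (ns : seq int) (f : int -> M),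
          [/\ uniq ns, (forall n, f n \in Mn n) & x = \sum_(n <- ns) f n]) &
      (forall (ns : seq int) (f : int -> M),
          uniq ns -> (forall n, f n \in Mn n) -> \sum_(n <- ns) f n = 0 ->
          forall n, n \in ns -> f n = 0)].

Definition bounded_below (k : comRingType) (r : nat)
    (M : lmodType {mpoly k[r]}) (Mn : int -> {pred M}) : Prop :=
  exists n0 : int, forall n, n < n0 -> forall x, x \in Mn n -> x = 0.

(* Tor^A_1(M, k) = 0, computed with the Koszul free resolution of
   k = A/(t_1,...,t_r) (t_1..t_r is a regular sequence in A):
   Tor_1 = H_1(K(t) (x)_A M), where K_1 (x) M = M^r -> M is
   (m_i) |-> sum_i t_i m_i, and K_2 (x) M = (wedge^2 A^r) (x) M -> M^r sends an
   alternating family (n_{ji}) to (sum_j t_j n_{ji})_i. *)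
Definition Tor1_k_vanishes (k : comRingType) (r : nat)
    (M : lmodType {mpoly k[r]}) : Prop :=
  forall m : 'I_r -> M,
    \sum_(i < r) 'X_i *: m i = 0 ->
    exists nn : 'I_r -> 'I_r -> M,
      [/\ (forall i, nn i i = 0),
          (forall i j, nn i j = - nn j i) &
          (forall i, m i = \sum_(j < r) 'X_j *: nn j i)].

(* The localisation map M -> S^{-1}M, m |-> m/1, is injective.  By definition
   of S^{-1}M, m/1 = 0 iff s m = 0 for some s in S. *)
Definition localisation_injective (k : comRingType) (r : nat)
    (M : lmodType {mpoly k[r]}) : Prop :=
  forall m : M, (exists s, in_S s /\ s *: m = 0) -> m = 0.

From HB Require Import structures.
From mathcomp Require Import all_boot all_algebra.
From mathcomp Require Import mpoly zify.
Set Implicit Arguments. Unset Strict Implicit. Unset Printing Implicit Defensive.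
Import GRing.Theory.
Local Open Scope ring_scope.

(* Since S is generated by the extendable linear forms, it suffices to show
   that each such form l is a nonzerodivisor on M.  Complete l to a basis
   b_1, ..., b_s of A^2; the Koszul complexes on t_1, ..., t_r and on
   b_1, ..., b_s differ by an invertible change of generators, so Tor_1 = 0
   says that H_1 of the Koszul complex on the b_j with coefficients in M
   vanishes.  This vanishing survives deleting one generator b_j: extend a
   homogeneous 1-cycle on the others by 0 and write it as a boundary dN with
   N homogeneous; the j-th row of N is then a 1-cycle on the others of degree
   two less, and induction on the degree, which is bounded below, corrects N.
   Deleting all generators but l leaves H_1 = annihilator of l in M. *)

Lemma sum_alternating_eq0 (V : zmodType) (T : Type) (s : seq T) (F : T -> T -> V) :
  (forall i, F i i = 0) -> (forall i j, F i j = - F j i) ->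
  \sum_(i <- s) \sum_(j <- s) F i j = 0.
Proof.
move=> F0 FN; elim: s => [|a s IHs]; first by rewrite big_nil.
under eq_bigr do rewrite big_cons.
rewrite big_cons F0 add0r big_split /= IHs addr0 -big_split /=.
by apply: big1 => i _; rewrite [F i a]FN subrr.
Qed.

Lemma sum_scale_delta (R : pzRingType) (V : lmodType R) (I : finType) (v : I -> V) j :
  \sum_i (i == j)%:R *: v i = v j.
Proof.
by rewrite (bigD1 j) //= eqxx scale1r big1 ?addr0 // => i /negbTE ->; rewrite scale0r.
Qed.

Lemma sum_by_key (V : nmodType) (K : eqType) (ks : seq K) (s : seq (K * V)) :
  uniq ks -> {subset unzip1 s <= ks} ->
  \sum_(n <- ks) \sum_(p <- s | p.1 == n) p.2 = \sum_(p <- s) p.2.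
Proof.
move=> uks sks; under eq_bigr do rewrite big_mkcond.
rewrite exchange_big big_seq [RHS]big_seq; apply: eq_bigr => p ps.
rewrite -big_mkcond (eq_bigl (pred1 p.1)) => [|n]; last exact: eq_sym.
by rewrite -big_filter filter_pred1_uniq ?big_seq1 // sks // map_f.
Qed.

Definition alternating (T : Type) (V : zmodType) (N : T -> T -> V) :=
  (forall i, N i i = 0) /\ (forall i j, N i j = - N j i).

Section KoszulComplex.
Variables (R : comPzRingType) (M : lmodType R) (I : finType) (y : I -> R).

Definition koszul_boundary (P : {set I}) (m : I -> M) :=
  exists N, alternating N /\ {in P, forall i, m i = \sum_(j in P) y j *: N j i}.

(* [H_1] of the Koszul complex on [(y i)_(i in P)] with coefficients in [M]
   vanishes; [N] above is the 2-chain. *)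
Definition koszul1_exact (P : {set I}) :=
  forall m : I -> M, \sum_(i in P) y i *: m i = 0 -> koszul_boundary P m.

Lemma koszul1_exactT :
  koszul1_exact [set: I] <->
  forall m : I -> M, \sum_i y i *: m i = 0 ->
    exists N, alternating N /\ forall i, m i = \sum_j y j *: N j i.
Proof.
have sumT (F : I -> M) : \sum_(i in [set: I]) F i = \sum_i F i.
  by apply: eq_bigl => i; rewrite in_setT.
split=> [ex m cyc | ex m].
  have [|N [altN eN]] := ex m; first by rewrite sumT.
  by exists N; split=> // i; rewrite -sumT eN.
rewrite sumT => /ex [N [altN eN]].
by exists N; split=> // i _; rewrite sumT.
Qed.

Lemma koszul_boundary_sum (T : Type) (s : seq T) (P : {set I}) (m : T -> I -> M) :
  (forall t, koszul_boundary P (m t)) ->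
  koszul_boundary P (fun i => \sum_(t <- s) m t i).
Proof.
move=> bm; elim: s => [|t s [N [[N0 NN] eN]]].
  exists (fun _ _ => 0); split; first by split=> // *; rewrite oppr0.
  by move=> i _; rewrite big_nil big1 // => j _; rewrite scaler0.
have [L [[L0 LN] eL]] := bm t.
exists (fun j i => L j i + N j i); split.
  by split=> [i|i j]; rewrite ?L0 ?N0 ?addr0 // LN NN opprD.
move=> i iP; rewrite big_cons eL // eN // -big_split.
by apply: eq_bigr => j _; rewrite scalerDr.
Qed.

Lemma koszul_boundary_row_cycle (P : {set I}) j N (m : I -> M) : alternating N -> j \in P ->
  {in P, forall i, m i = \sum_(l in P) y l *: N l i} -> m j = 0 ->
  \sum_(i in P :\ j) y i *: N j i = 0.
Proof.
move=> [N0 NN] jP eN mj0.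
have := eN j jP; rewrite mj0 (big_setD1 _ jP) /= N0 scaler0 add0r.
under eq_bigr do rewrite NN scalerN.
by rewrite sumrN => /eqP; rewrite eq_sym oppr_eq0 => /eqP.
Qed.

Lemma koszul_boundary_setD1 (P : {set I}) j N (m : I -> M) : alternating N -> j \in P ->
  {in P :\ j, forall i, m i = \sum_(l in P) y l *: N l i} ->
  koszul_boundary (P :\ j) (N j) -> koszul_boundary (P :\ j) m.
Proof.
move=> [N0 NN] jP eN [L [[L0 LN] eL]].
exists (fun l i => N l i + y j *: L l i); split.
  split=> [i|i l]; first by rewrite N0 L0 scaler0 addr0.
  by rewrite NN LN scalerN opprD.
move=> i iQ; rewrite eN // (big_setD1 _ jP) /= eL // scaler_sumr -big_split /=.
by apply: eq_bigr => l _; rewrite scalerDr !scalerA mulrC addrC.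
Qed.

Lemma koszul1_exact_regular j :
  koszul1_exact [set j] -> forall m : M, y j *: m = 0 -> m = 0.
Proof.
move=> ex m ym0; have [|N [[N0 _] eN]] := ex (fun _ => m); first by rewrite big_set1.
by rewrite (eN j (set11 j)) big_set1 N0 scaler0.
Qed.

End KoszulComplex.

Lemma koszul1_exact_change (R : comPzRingType) (M : lmodType R) (I J : finType)
    (x : I -> R) (y : J -> R) (B T : I -> J -> R) :
  (forall j, y j = \sum_i B i j * x i) -> (forall i, x i = \sum_j T i j * y j) ->
  (forall j j', \sum_i B i j * T i j' = (j == j')%:R) ->
  koszul1_exact M x [set: I] -> koszul1_exact M y [set: J].
Proof.
move=> ey ex BT /koszul1_exactT exx; apply/koszul1_exactT => m cyc.
pose m' i := \sum_j B i j *: m j.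
have cyc' : \sum_i x i *: m' i = 0.
  rewrite -[RHS]cyc /m'; under eq_bigr do rewrite scaler_sumr; rewrite exchange_big /=.
  apply: eq_bigr => j _; rewrite ey scaler_suml.
  by apply: eq_bigr => i _; rewrite !scalerA mulrC.
have [N [[N0 NN] eN]] := exx m' cyc'.
exists (fun a c => \sum_l \sum_i (T l a * T i c) *: N l i); split; first split.
- move=> a; apply: sum_alternating_eq0 => [l|l i]; first by rewrite N0 scaler0.
  by rewrite NN scalerN mulrC.
- move=> a c; rewrite exchange_big -sumrN; apply: eq_bigr => i _.
  by rewrite -sumrN; apply: eq_bigr => l _; rewrite NN scalerN mulrC.
move=> j.
have -> : m j = \sum_i T i j *: m' i.
  rewrite /m'; under eq_bigr do rewrite scaler_sumr; rewrite exchange_big /=.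
  under eq_bigr do (under eq_bigr do rewrite scalerA; rewrite -scaler_suml).
  rewrite -[LHS]sum_scale_delta; apply: eq_bigr => j' _.
  by rewrite -BT; congr (_ *: _); apply: eq_bigr => i _; rewrite mulrC.
under eq_bigr do rewrite eN scaler_sumr.
rewrite exchange_big /=.
under eq_bigr do (under eq_bigr do rewrite ex scaler_suml scaler_sumr).
under eq_bigr do rewrite exchange_big /=.
rewrite exchange_big /=; apply: eq_bigr => a _.
rewrite scaler_sumr; apply: eq_bigr => l _; rewrite scaler_sumr; apply: eq_bigr => i _.
by rewrite !scalerA mulrCA [y a * _]mulrC -mulrA.
Qed.

Section GradedModule.
Variables (k : comNzRingType) (r : nat) (M : lmodType {mpoly k[r]}) (Mn : int -> {pred M}).
Hypothesis gradedM : graded_module Mn.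

Lemma graded0 n : 0 \in Mn n.
Proof. by case: gradedM. Qed.

Lemma gradedD n x y : x \in Mn n -> y \in Mn n -> x + y \in Mn n.
Proof. by case: gradedM => _ addM _ _ _; apply: addM. Qed.

Lemma gradedZ n (a : {mpoly k[r]}) d x :
  a \is d.-homog -> x \in Mn n -> a *: x \in Mn (n + (2 * d)%:Z).
Proof. by case: gradedM => _ _ scaleM _ _; apply: scaleM. Qed.

Lemma gradedN n x : x \in Mn n -> - x \in Mn n.
Proof.
have N1 : (-1 : {mpoly k[r]}) \is 0.-homog by rewrite rpredN dhomog1.
by move=> /(gradedZ N1); rewrite scaleN1r muln0 addr0.
Qed.

Lemma graded_sum (T : Type) n (s : seq T) (P : pred T) (F : T -> M) :
  (forall t, P t -> F t \in Mn n) -> \sum_(t <- s | P t) F t \in Mn n.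
Proof.
by move=> hF; apply: (big_ind (fun v => v \in Mn n)); [exact: graded0 | exact: gradedD |].
Qed.

(* Degrees may repeat, so concatenations and images of such lists are again
   such lists. *)
Definition homog_pieces (s : seq (int * M)) := all (fun p => p.2 \in Mn p.1) s.

Lemma homog_pieces_eq0 s n : homog_pieces s -> \sum_(p <- s) p.2 = 0 ->
  \sum_(p <- s | p.1 == n) p.2 = 0.
Proof.
move=> /allP hs s0; case: gradedM => _ _ _ _ uniqM.
apply: (uniqM (undup (n :: unzip1 s)) (fun n => \sum_(p <- s | p.1 == n) p.2)).
- exact: undup_uniq.
- move=> m /=; rewrite big_seq_cond; apply: graded_sum => p /andP[/hs + /eqP <-] //.
- by rewrite sum_by_key ?undup_uniq // => m ms; rewrite mem_undup in_cons ms orbT.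
- by rewrite mem_undup mem_head.
Qed.

Lemma homog_pieces_exist x : exists s, homog_pieces s && (x == \sum_(p <- s) p.2).
Proof.
case: gradedM => _ _ _ decM _; have [ns [f [_ hf ->]]] := decM x.
exists [seq (n, f n) | n <- ns]; rewrite big_map eqxx andbT.
by apply/allP => _ /mapP[n _ ->]; exact: hf.
Qed.

Definition pieces x := xchoose (homog_pieces_exist x).

Lemma piecesP x : homog_pieces (pieces x) /\ x = \sum_(p <- pieces x) p.2.
Proof. by have /andP[hx /eqP ex] := xchooseP (homog_pieces_exist x). Qed.

Definition homog_comp n x := \sum_(p <- pieces x | p.1 == n) p.2.

Lemma homog_comp_pieces s n : homog_pieces s ->
  homog_comp n (\sum_(p <- s) p.2) = \sum_(p <- s | p.1 == n) p.2.
Proof.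
move=> hs; set x := \sum_(p <- s) p.2; have [hx ex] := piecesP x.
pose t := pieces x ++ [seq (p.1, - p.2) | p <- s].
have ht : homog_pieces t.
  rewrite /homog_pieces all_cat; apply/andP; split=> //; rewrite all_map.
  by apply/allP => p /(allP hs); exact: gradedN.
have t0 : \sum_(p <- t) p.2 = 0 by rewrite big_cat big_map /= sumrN -ex subrr.
apply/eqP; rewrite -subr_eq0; apply/eqP.
by have := homog_pieces_eq0 n ht t0; rewrite big_cat big_map /= sumrN.
Qed.

Lemma homog_comp_is_nmod_morphism n : nmod_morphism (homog_comp n).
Proof.
split=> [|x y]; first by have := @homog_comp_pieces [::] n; rewrite !big_nil; apply.
have [hx ex] := piecesP x; have [hy ey] := piecesP y.
rewrite {1}ex {1}ey -big_cat homog_comp_pieces ?big_cat //.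
by rewrite /homog_pieces all_cat; apply/andP.
Qed.

HB.instance Definition _ n :=
  GRing.isNmodMorphism.Build M M (homog_comp n) (homog_comp_is_nmod_morphism n).

Lemma homog_comp_homog n x : homog_comp n x \in Mn n.
Proof.
have [/allP hx _] := piecesP x; rewrite /homog_comp big_seq_cond.
by apply: graded_sum => p /andP[/hx + /eqP <-].
Qed.

Lemma homog_comp_id n x : x \in Mn n -> homog_comp n x = x.
Proof.
move=> hx; have := @homog_comp_pieces [:: (n, x)] n.
by rewrite !big_cons !big_nil /= eqxx /homog_pieces /= hx !addr0; apply.
Qed.

Lemma homog_compZ n (a : {mpoly k[r]}) d x : a \is d.-homog ->
  homog_comp n (a *: x) = a *: homog_comp (n - (2 * d)%:Z) x.
Proof.
move=> ha; have [hx ex] := piecesP x.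
pose s := [seq (p.1 + (2 * d)%:Z, a *: p.2) | p <- pieces x].
have hs : homog_pieces s.
  by rewrite /homog_pieces all_map; apply/allP => p /(allP hx) /=; exact: gradedZ.
have -> : a *: x = \sum_(p <- s) p.2 by rewrite big_map {1}ex scaler_sumr.
rewrite homog_comp_pieces // big_map /homog_comp scaler_sumr; apply: eq_bigl => p /=.
by rewrite [RHS]eq_sym subr_eq eq_sym.
Qed.

Lemma homog_comp_decomp (I : finType) (z : I -> M) :
  exists S : seq int, forall i, z i = \sum_(n <- S) homog_comp n (z i).
Proof.
exists (undup (flatten [seq unzip1 (pieces (z i)) | i <- enum I])) => i.
have [_ ez] := piecesP (z i); rewrite /homog_comp sum_by_key ?undup_uniq // => n ns.
rewrite mem_undup; apply/flattenP; exists (unzip1 (pieces (z i))) => //.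
by apply: map_f; rewrite mem_enum.
Qed.

End GradedModule.

Section GradedKoszul.
Variables (k : comNzRingType) (r : nat) (M : lmodType {mpoly k[r]}) (Mn : int -> {pred M}).
Hypotheses (gradedM : graded_module Mn) (boundedM : bounded_below Mn).
Variables (I : finType) (y : I -> {mpoly k[r]}).
Hypothesis y_linear : forall i, y i \is 1.-homog.

Local Notation homog_comp := (homog_comp gradedM).

Lemma homog_compZ_linear n i x : homog_comp n (y i *: x) = y i *: homog_comp (n - 2) x.
Proof. by rewrite (homog_compZ _ _ _ (y_linear i)). Qed.

Lemma koszul1_exact_homog (P : {set I}) D (m : I -> M) :
  koszul1_exact M y P -> (forall i, m i \in Mn D) -> \sum_(i in P) y i *: m i = 0 ->
  exists N, [/\ alternating N, forall l i, N l i \in Mn (D - 2)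
              & {in P, forall i, m i = \sum_(l in P) y l *: N l i}].
Proof.
move=> ex hm /ex [N [[N0 NN] eN]].
exists (fun l i => homog_comp (D - 2) (N l i)); split.
- by split=> [i|i l]; rewrite ?N0 ?raddf0 // NN raddfN.
- by move=> l i; apply: homog_comp_homog.
move=> i iP; rewrite -(homog_comp_id gradedM (hm i)) eN // raddf_sum.
by apply: eq_bigr => l _ /=; rewrite homog_compZ_linear.
Qed.

Lemma koszul1_exact_setD1_homog (P : {set I}) j D (z : I -> M) :
  koszul1_exact M y P -> j \in P -> (forall i, z i \in Mn D) ->
  \sum_(i in P :\ j) y i *: z i = 0 -> koszul_boundary y (P :\ j) z.
Proof.
move=> ex jP; have [n0 hn0] := boundedM.
have [d leD] : exists d : nat, D < n0 + d%:Z by exists `|D - n0|.+1; lia.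
elim: d D leD z => [|d IHd] D leD z hz cyc.
  exists (fun _ _ => 0); split; first by split=> // *; rewrite oppr0.
  move=> i _; rewrite (hn0 D _ _ (hz i)); last by rewrite addr0 in leD.
  by rewrite big1 // => l _; rewrite scaler0.
pose m i := if i == j then 0 else z i.
have hm i : m i \in Mn D by rewrite /m; case: eqP => _; [exact: graded0 | exact: hz].
have cycm : \sum_(i in P) y i *: m i = 0.
  rewrite (big_setD1 _ jP) /= /m eqxx scaler0 add0r -[RHS]cyc.
  by apply: eq_bigr => i; rewrite in_setD1 => /andP[/negbTE ->].
have [N [altN hN eN]] := koszul1_exact_homog ex hm cycm.
apply: (koszul_boundary_setD1 altN jP) => [i iQ|].
  by move: (iQ); rewrite in_setD1 => /andP[ij iP]; rewrite -eN // /m (negbTE ij).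
apply: (IHd (D - 2)); [lia | exact: hN |].
by apply: (koszul_boundary_row_cycle altN jP eN); rewrite /m eqxx.
Qed.

Lemma koszul1_exact_setD1 (P : {set I}) j :
  koszul1_exact M y P -> j \in P -> koszul1_exact M y (P :\ j).
Proof.
move=> ex jP z cyc; have [S eS] := homog_comp_decomp gradedM z.
have hom D : koszul_boundary y (P :\ j) (fun i => homog_comp D (z i)).
  apply: (koszul1_exact_setD1_homog (D := D) ex jP) => [i|]; first exact: homog_comp_homog.
  transitivity (homog_comp (D + 2) (\sum_(i in P :\ j) y i *: z i)).
    by rewrite raddf_sum; apply: eq_bigr => i _ /=; rewrite homog_compZ_linear addrK.
  by rewrite cyc raddf0.
have [N [altN eN]] := koszul_boundary_sum S hom.
by exists N; split=> // i iQ; rewrite eS eN.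
Qed.

Lemma koszul1_exact_subset (P Q : {set I}) :
  koszul1_exact M y P -> Q \subset P -> koszul1_exact M y Q.
Proof.
have [n] := ubnP #|P :\: Q|; elim: n P => // n IHn P ltPn exP sQP.
have [PQ0 | [j jPQ]] := set_0Vmem (P :\: Q).
  suff -> : Q = P by [].
  by apply/eqP; rewrite eqEsubset sQP -setD_eq0 PQ0 /=.
move: (jPQ); rewrite inE => /andP[jQ jP].
apply: (IHn (P :\ j)); last by rewrite subsetD1 sQP jQ.
- suff /proper_card : (P :\ j) :\: Q \proper P :\: Q by lia.
  apply/properP; split; first by apply: setSD; exact: subD1set.
  by exists j; rewrite // !inE eqxx andbF.
- exact: koszul1_exact_setD1.
Qed.

End GradedKoszul.

Lemma dhomog1_sumX (k : comNzRingType) (r : nat) (p : {mpoly k[r]}) :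
  p \is 1.-homog -> p = \sum_i p@_U_(i) *: 'X_i.
Proof.
move=> hp; apply/mpolyP => m; rewrite raddf_sum /=.
have [/mdeg1P[j /eqP ->] | hm] := boolP (mdeg m == 1%N).
  rewrite (bigD1 j) //= mcoeffZ mcoeffXU eqxx mulr1 big1 ?addr0 // => i ij.
  by rewrite mcoeffZ mcoeffXU (negbTE ij) mulr0.
rewrite (dhomog_nemf_coeff hp hm) big1 // => i _.
rewrite mcoeffZ mcoeffX; case: eqP => [ei|]; last by rewrite mulr0.
by move: hm; rewrite -ei mdeg1.
Qed.

Lemma is_basis_A2_change (k : comNzRingType) (r s : nat) (b : 'I_s -> {mpoly k[r]}) :
  is_basis_A2 b ->
  exists B T : 'I_r -> 'I_s -> k,
    [/\ forall j, b j = \sum_i B i j *: 'X_i,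
        forall i, 'X_i = \sum_j T i j *: b j
      & forall j j', \sum_i B i j * T i j' = (j == j')%:R].
Proof.
move=> [b_lin b_span b_free].
have X_span i : exists c : 'I_s -> k, 'X_i = \sum_j c j *: b j.
  by apply: b_span; rewrite /linear_elt dhomogX; apply/eqP; exact: mdeg1.
have [T eT] := fin_all_exists X_span.
pose B i j := (b j)@_U_(i).
have eB j : b j = \sum_i B i j *: 'X_i by exact: dhomog1_sumX (b_lin j).
exists B, T; split=> // j j'; apply/eqP; rewrite -subr_eq0 [j == j']eq_sym; apply/eqP.
apply: (b_free (fun j' => \sum_i B i j * T i j' - (j' == j)%:R)).
under eq_bigr do rewrite scalerBl.
rewrite sumrB sum_scale_delta; apply/eqP; rewrite subr_eq0; apply/eqP.
under eq_bigr do rewrite scaler_suml; rewrite exchange_big [RHS]eB /=.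
by apply: eq_bigr => i _; rewrite eT scaler_sumr; apply: eq_bigr => l _; rewrite scalerA.
Qed.

Lemma Tor1_koszul1_exact (k : comNzRingType) (r : nat) (M : lmodType {mpoly k[r]}) :
  Tor1_k_vanishes M -> koszul1_exact M (fun i : 'I_r => 'X_i) [set: 'I_r].
Proof. by move=> tor; apply/koszul1_exactT => m /tor[N [N0 NN eN]]; exists N. Qed.

Lemma koszul1_exact_basis_A2 (k : comNzRingType) (r s : nat) (M : lmodType {mpoly k[r]})
    (b : 'I_s -> {mpoly k[r]}) :
  Tor1_k_vanishes M -> is_basis_A2 b -> koszul1_exact M b [set: 'I_s].
Proof.
move=> tor /is_basis_A2_change[B [T [eB eT BT]]].
apply: (koszul1_exact_change (B := fun i j => (B i j)%:MP) (T := fun i j => (T i j)%:MP)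
         _ _ _ (Tor1_koszul1_exact tor)) => [j|i|j j'].
- by rewrite eB; apply: eq_bigr => i _; rewrite mul_mpolyC.
- by rewrite eT; apply: eq_bigr => j _; rewrite mul_mpolyC.
- by under eq_bigr do rewrite -mpolyCM; rewrite -raddf_sum BT /= rmorph_nat.
Qed.

Lemma extendable_linear_regular (k : comNzRingType) (r : nat) (M : lmodType {mpoly k[r]})
    (Mn : int -> {pred M}) (l : {mpoly k[r]}) :
  graded_module Mn -> bounded_below Mn -> Tor1_k_vanishes M -> extendable_linear l ->
  forall m : M, l *: m = 0 -> m = 0.
Proof.
move=> gradedM boundedM tor [s [b [j [basis ->]]]].
apply: koszul1_exact_regular.
have [b_lin _ _] := basis.
apply: (koszul1_exact_subset gradedM boundedM b_lin (koszul1_exact_basis_A2 tor basis)).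
exact: subsetT.
Qed.

Theorem lemma2p5 (k : comRingType) (r : nat) (M : lmodType {mpoly k[r]})
    (Mn : int -> {pred M}) :
  graded_module Mn -> bounded_below Mn -> Tor1_k_vanishes M ->
  localisation_injective M.
Proof.
move=> gradedM boundedM tor m [_ [[ls [lsS ->]]]].
elim: ls m lsS => [|l ls IHls] m lsS; first by rewrite big_nil scale1r.
rewrite big_cons -scalerA.
move/(extendable_linear_regular gradedM boundedM tor (lsS l (mem_head _ _))).
by apply: IHls => l' l'ls; apply: lsS; rewrite in_cons l'ls orbT.
Qed.
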